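(* Let $\mathbb F$ be a field of characteristic $2$, let $S=\{R_0,\dots,R_d\}$ be a quasi-thin scheme on $X$, $x\in X$, $\mathcal T=\mathcal T(x)$, and $E_a^*=E_a^*(x)$. Then the Jacobson radical of $\mathcal T$ equals $$\mathcal J_1=\bigl\langle \{E_a^*JE_b^*: R_a,R_b\in S,\ \max\{k_a,k_b\}=2\}\bigr\rangle_{\mathbb F},$$ where $J$ is the all-ones matrix.
   Context: Let $X$ be a nonempty finite set. A scheme of class $d$ on $X$ is a partition $S=\{R_0,\dots,R_d\}$ of $X\times X$ into nonempty sets such that $R_0=\{(b,b):b\in X\}$; for each $c$ there is $c'$ with $R_{c'}=\{(f,e):(e,f)\in R_c\}$; and for all $i,j,k$ the intersection number $p_{ij}^k=|\{\ell\in X:(m,\ell)\in R_i,(\ell,n)\in R_j\}|$ does not depend on $(m,n)\in R_k$. The valency of $R_a$ is $k_a=p_{aa'}^0$; $S$ is quasi-thin if all $k_a\le 2$. For $y\in X$, $yR_a=\{z:(y,z)\in R_a\}$. $A_a\in M_X(\mathbb F)$ is the $(0,1)$ adjacency matrix of $R_a$ and $E_a^*(y)$ is the diagonal $(0,1)$-matrix with ones exactly at positions indexed by $yR_a$. The Terwilliger $\mathbb F$-algebra $\mathcal T(y)$ is the $\mathbb F$-subalgebra of $M_X(\mathbb F)$ generated by $A_0,\dots,A_d,E_0^*(y),\dots,E_d^*(y)$. $\langle Y\rangle_{\mathbb F}$ denotes $\mathbb F$-linear span (the zero space if $Y$ is empty). *)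

From HB Require Import structures.
From mathcomp Require Import all_boot all_order all_algebra.
Set Implicit Arguments. Unset Strict Implicit. Unset Printing Implicit Defensive.
Import GRing.Theory.
Local Open Scope ring_scope.

(* The finite set X is modelled as 'I_n; a partition of X x X into
   R_0,...,R_d is given by the map r : X -> X -> 'I_d.+1 with
   R_a = [set (y,z) | r y z == a]. *)

Definition rel_class n d (r : 'I_n -> 'I_n -> 'I_d.+1) (a : 'I_d.+1) (y : 'I_n) :
  {set 'I_n} := [set z | r y z == a].

Definition inter_count n d (r : 'I_n -> 'I_n -> 'I_d.+1) (i j : 'I_d.+1)
  (m m' : 'I_n) : nat := #|[set l | (r m l == i) && (r l m' == j)]|.

Definition is_scheme n d (r : 'I_n -> 'I_n -> 'I_d.+1) : Prop :=
  [/\ (0 < n)%N,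
      forall a : 'I_d.+1, exists y z, r y z = a,
      forall y z, (r y z == ord0) = (y == z),
      forall c : 'I_d.+1, exists c' : 'I_d.+1, forall y z, r y z = c <-> r z y = c' &
      forall i j k : 'I_d.+1, exists p : nat,
        forall m m', r m m' = k -> inter_count r i j m m' = p].

(* valency k_a = p_{aa'}^0 = |y R_a| for any y (for a scheme independent of y) *)
Definition valency n d (r : 'I_n -> 'I_n -> 'I_d.+1) (y : 'I_n) (a : 'I_d.+1) : nat :=
  #|rel_class r a y|.

Definition quasi_thin n d (r : 'I_n -> 'I_n -> 'I_d.+1) : Prop :=
  forall (y : 'I_n) (a : 'I_d.+1), (valency r y a <= 2)%N.

Definition adjmx (F : fieldType) n d (r : 'I_n -> 'I_n -> 'I_d.+1) (a : 'I_d.+1)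
  : 'M[F]_n := \matrix_(i, j) (r i j == a)%:R.

Definition dualidem (F : fieldType) n d (r : 'I_n -> 'I_n -> 'I_d.+1) (x : 'I_n)
  (a : 'I_d.+1) : 'M[F]_n := \matrix_(i, j) ((i == j) && (r x i == a))%:R.

Definition onesmx (F : fieldType) n : 'M[F]_n := const_mx 1.

Inductive terwilliger (F : fieldType) n d (r : 'I_n -> 'I_n -> 'I_d.+1) (x : 'I_n)
  : 'M[F]_n -> Prop :=
| T_one : terwilliger r x 1%:M
| T_adj a : terwilliger r x (adjmx F r a)
| T_dual a : terwilliger r x (dualidem F r x a)
| T_add M N : terwilliger r x M -> terwilliger r x N -> terwilliger r x (M + N)
| T_scale (c : F) M : terwilliger r x M -> terwilliger r x (c *: M)
| T_mul M N : terwilliger r x M -> terwilliger r x N -> terwilliger r x (M *m N).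

Definition left_ideal (F : fieldType) n (A L : 'M[F]_n -> Prop) : Prop :=
  [/\ forall M, L M -> A M,
      L 0,
      forall M N, L M -> L N -> L (M + N) &
      forall M N, A M -> L N -> L (M *m N)].

Definition maximal_left_ideal (F : fieldType) n (A L : 'M[F]_n -> Prop) : Prop :=
  [/\ left_ideal A L,
      exists M, A M /\ ~ L M &
      forall L', left_ideal A L' -> (forall M, L M -> L' M) ->
        (forall M, L' M <-> L M) \/ (forall M, L' M <-> A M)].

Definition jacobson_radical (F : fieldType) n (A : 'M[F]_n -> Prop) : 'M[F]_n -> Prop :=
  fun M => A M /\ forall L, maximal_left_ideal A L -> L M.

Definition J1 (F : fieldType) n d (r : 'I_n -> 'I_n -> 'I_d.+1) (x : 'I_n)
  : 'M[F]_n -> Prop :=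
  fun M => exists c : 'I_d.+1 -> 'I_d.+1 -> F,
    M = \sum_(a : 'I_d.+1) \sum_(b : 'I_d.+1 | maxn (valency r x a) (valency r x b) == 2%N)
          c a b *: (dualidem F r x a *m onesmx F n *m dualidem F r x b).

From mathcomp Require Import all_boot all_order all_algebra.
From Stdlib Require Import Classical.
Set Implicit Arguments. Unset Strict Implicit. Unset Printing Implicit Defensive.
Import GRing.Theory.
Local Open Scope ring_scope.

(* Write X_a = xR_a; by quasi-thinness every such cell is a singleton (thin) or a
   pair (thick).  Each element of T(x) preserves the cell-constant vectors and, as
   T(x) is closed under transposition, also their orthogonal, which in
   characteristic 2 consists of the "balanced" vectors summing to zero on every cell.

   A radical element annihilates every simple module, and three simple quotients
   suffice: the one generated by the indicator of a thin cell modulo balanced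
   vectors, the one generated by the indicator of a thick cell, and the one
   generated by a point of a thick cell modulo cell-constant vectors.  Simplicity
   comes from the intersection numbers: if a point has a unique R_c-neighbour in a
   cell of the same size, double counting gives every point of that cell a unique
   R_c'-neighbour back, so E_b^* A_c' carries one cell indicator to the other.
   Annihilating these modules forces a radical element to be constant on the blocks
   X_a x X_b and to vanish on thin x thin blocks, which is membership in J_1.

   Conversely, J_1 is a left ideal of T(x) all of whose elements N satisfy N^3 = 0,
   since thick cells contribute 2 = 0 to matrix products, and a nil left ideal lies
   in the radical. *)

(** * Nil left ideals and simple quotients *)

(* [mxpow N k] is [N ^+ k]; ['M_n] is a ring only when [n > 0]. *)
Definition mxpow (F : fieldType) n (N : 'M[F]_n) k := iter k (mulmx^~ N) 1%:M.

Section LeftIdeals.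

Variables (F : fieldType) (n : nat) (A : 'M[F]_n -> Prop).
Hypotheses (A1 : A 1%:M) (AD : forall M N, A M -> A N -> A (M + N))
  (AZ : forall c M, A M -> A (c *: M)) (AM : forall M N, A M -> A N -> A (M *m N)).

Lemma subalgN M : A M -> A (- M).
Proof. by move/(AZ (-1)); rewrite scaleN1r. Qed.

Lemma subalg0 : A 0.
Proof. by have := AZ 0 A1; rewrite scale0r. Qed.

Lemma subalg_mxpow N k : A N -> A (mxpow N k).
Proof. by move=> AN; elim: k => //= k IHk; apply: AM. Qed.

Section Annihilator.

Variables (W : 'cV[F]_n -> Prop) (v : 'cV[F]_n).
Hypotheses (W0 : W 0) (WD : forall u w, W u -> W w -> W (u + w))
  (WA : forall N w, A N -> W w -> W (N *m w)) (Wv : ~ W v).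
(* [v] generates a simple module modulo [W]. *)
Hypothesis Wsimple :
  forall N, A N -> ~ W (N *m v) -> exists2 P, A P & W (P *m (N *m v) - v).

Lemma maximal_left_ideal_annihilator :
  maximal_left_ideal A (fun P => A P /\ W (P *m v)).
Proof.
split.
- split=> [M [] // | | M N [aM WM] [aN WN] | M N aM [aN WN]].
  + by rewrite mul0mx; split; [apply: subalg0 | ].
  + by rewrite mulmxDl; split; [apply: AD | apply: WD].
  + by rewrite -mulmxA; split; [apply: AM | apply: WA].
- by exists 1%:M; split=> // -[_]; rewrite mul1mx.
move=> L [LA _ LD LM] sub.
have [[N LN nWN] | LsubW] := classic (exists2 N, L N & ~ (A N /\ W (N *m v))); last first.
  left=> M; split=> [LM' | /sub //]; apply: NNPP => nWM; apply: LsubW; by exists M.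
right=> M; split=> [/LA // | aM].
have AN := LA N LN.
have [P AP WP] : exists2 P, A P & W (P *m (N *m v) - v).
  by apply: Wsimple => // WN; apply: nWN.
have L1 : L 1%:M.
  have LPN1 : L (P *m N - 1%:M).
    apply: sub; split; [exact: AD (AM AP AN) (subalgN A1)|].
    by rewrite mulmxBl mul1mx -mulmxA.
  have := LD _ _ (LM _ _ AP LN) (LM _ _ (subalgN A1) LPN1).
  by rewrite mulNmx mul1mx opprB addrC subrK.
by have := LM _ _ aM L1; rewrite mulmx1.
Qed.

Lemma jacobson_radical_annihilates M : jacobson_radical A M -> W (M *m v).
Proof. by case=> _ /(_ _ maximal_left_ideal_annihilator) []. Qed.

End Annihilator.

Lemma left_ideal_one_sub_nilpotent L N k :
  left_ideal A L -> A N -> L (1%:M - N) -> mxpow N k = 0 -> L 1%:M.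
Proof.
case=> _ L0 LD LM AN L1N Nk0.
suff: L (1%:M - mxpow N k) by rewrite Nk0 subr0.
elim: k {Nk0} => [|k IHk] /=; first by rewrite subrr.
have := LD _ _ IHk (LM _ _ (subalg_mxpow k AN) L1N).
by rewrite mulmxBr mulmx1 addrA subrK.
Qed.

Lemma jacobson_radical_nil M :
  A M -> (forall Q, A Q -> exists k, mxpow (Q *m M) k = 0) ->
  jacobson_radical A M.
Proof.
move=> aM nilM; split=> // L [[LA L0 LD LM] [M1 [AM1 nLM1]] Lmax].
apply: NNPP => nLM.
pose L' P := exists l Q, [/\ L l, A Q & P = l + Q *m M].
have L'L P : L P -> L' P by exists P, 0; rewrite mul0mx addr0; split=> //; apply: subalg0.
have idealL' : left_ideal A L'.
  split.
  - by move=> _ [l [Q [Ll AQ ->]]]; apply: AD (LA _ Ll) (AM AQ aM).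
  - exact: L'L.
  - move=> _ _ [l1 [Q1 [L1 AQ1 ->]]] [l2 [Q2 [L2 AQ2 ->]]].
    by exists (l1 + l2), (Q1 + Q2); rewrite mulmxDl addrACA; split; [apply: LD | apply: AD |].
  - move=> P _ AP [l [Q [Ll AQ ->]]].
    by exists (P *m l), (P *m Q); rewrite mulmxDr mulmxA; split; [apply: LM | apply: AM |].
have L'M : L' M by exists 0, 1%:M; rewrite mul1mx add0r; split.
case: (Lmax L' idealL' L'L) => [/(_ M) [/(_ L'M) //] | L'A].
have [l [Q [Ll AQ E1]]] : L' 1%:M by apply/L'A.
have [k nilQM] := nilM Q AQ.
have L1 : L 1%:M.
  apply: (left_ideal_one_sub_nilpotent _ (AM AQ aM) _ nilQM); first by split.
  by rewrite E1 addrK.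
by apply: nLM1; have := LM _ _ AM1 L1; rewrite mulmx1.
Qed.

End LeftIdeals.

(** * The Terwilliger algebra *)

Section Terwilliger.

Variables (F : fieldType) (n d : nat) (r : 'I_n -> 'I_n -> 'I_d.+1) (x : 'I_n).
Local Notation T := (terwilliger (F := F) r x).

Lemma terwilliger0 : T 0.
Proof. exact: subalg0 (@T_one F n d r x) (@T_scale F n d r x). Qed.

Lemma terwilliger_sum (I : finType) (P : pred I) (f : I -> 'M[F]_n) :
  (forall i, P i -> T (f i)) -> T (\sum_(i | P i) f i).
Proof. by move=> Tf; apply: big_ind => //; [apply: terwilliger0 | apply: T_add]. Qed.

Lemma terwilliger_stable (W : 'cV[F]_n -> Prop) :
  (forall u w, W u -> W w -> W (u + w)) -> (forall c w, W w -> W (c *: w)) ->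
  (forall a w, W w -> W (adjmx F r a *m w)) ->
  (forall a w, W w -> W (dualidem F r x a *m w)) ->
  forall M w, T M -> W w -> W (M *m w).
Proof.
move=> WD WZ WA WE M w TM; elim: TM w => {M} [w | a w | a w | M N _ IHM _ IHN w
  | c M _ IHM w | M N _ IHM _ IHN w] Ww.
- by rewrite mul1mx.
- exact: WA.
- exact: WE.
- by rewrite mulmxDl; apply: WD; [apply: IHM | apply: IHN].
- by rewrite -scalemxAl; apply: WZ; apply: IHM.
- by rewrite -mulmxA; apply: IHM; apply: IHN.
Qed.

Hypothesis r_tr : forall c, exists c', forall y z, r y z = c <-> r z y = c'.

Lemma terwilliger_tr M : T M -> T M^T.
Proof.
elim=> {M} [| a | a | M N _ TM _ TN | c M _ TM | M N _ TM _ TN].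
- by rewrite tr_scalar_mx; apply: T_one.
- have [a' tr_a] := r_tr a.
  suff -> : (adjmx F r a)^T = adjmx F r a' by apply: T_adj.
  apply/matrixP=> i j; rewrite !mxE.
  by congr ((nat_of_bool _)%:R); apply/eqP/eqP => /tr_a.
- suff -> : (dualidem F r x a)^T = dualidem F r x a by apply: T_dual.
  apply/matrixP=> i j; rewrite !mxE eq_sym.
  by case: eqP => [-> | ].
- by rewrite linearD; apply: T_add.
- by rewrite linearZ; apply: T_scale.
- by rewrite trmx_mul; apply: T_mul.
Qed.

End Terwilliger.

(** * Cells of a quasi-thin scheme *)

Lemma sum_neq0P (V : nmodType) (I : finType) (P : pred I) (f : I -> V) :
  \sum_(i | P i) f i != 0 -> exists2 i, P i & f i != 0.
Proof.
move=> nz; apply/exists_inP; apply: contraNT nz => /exists_inPn f0.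
by rewrite big1 // => i /f0 /negPn /eqP.
Qed.

Section QuasiThin.

Variables (F : fieldType) (n d : nat) (r : 'I_n -> 'I_n -> 'I_d.+1) (x : 'I_n).
Hypothesis r_tr : forall c, exists c', forall y z, r y z = c <-> r z y = c'.
Hypothesis r_inter :
  forall i j k, exists p, forall m m', r m m' = k -> inter_count r i j m m' = p.
Hypothesis qthin_x : forall a, (valency r x a <= 2)%N.
Hypothesis char2 : (2 \in [pchar F])%N.

Local Notation cls i := (r x i).
Local Notation kk a := (valency r x a).
Local Notation T := (terwilliger (F := F) r x).
Local Notation adj := (adjmx F r).
Local Notation dual := (dualidem F r x).
Local Notation ev l := (delta_mx l 0 : 'cV[F]_n).

Definition mate p := odflt p [pick q | (cls q == cls p) && (q != p)].

Definition thin p := mate p == p.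

Lemma cls_mate p : cls (mate p) = cls p.
Proof. by rewrite /mate; case: pickP => //= q /andP [/eqP]. Qed.

Lemma cell_mate p : rel_class r (cls p) x = [set p; mate p].
Proof.
apply/esym/eqP; rewrite eqEcard; apply/andP; split.
  by apply/subsetP => l /set2P [] ->; rewrite inE ?cls_mate.
rewrite cards2 /mate; case: pickP => [q /andP [_ nqp] | none] /=.
  by rewrite eq_sym nqp; apply: qthin_x.
rewrite eqxx -(cards1 p); apply/subset_leq_card/subsetP => l; rewrite !inE => Cl.
by apply: contraFT (none l) => nlp; rewrite Cl.
Qed.

Lemma mate_cell p l : cls l = cls p -> l = p \/ l = mate p.
Proof.
move=> Cl; have : l \in rel_class r (cls p) x by rewrite inE Cl.
by rewrite cell_mate => /set2P.
Qed.

Lemma valency_mate p : kk (cls p) = (~~ thin p).+1.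
Proof. by rewrite /valency cell_mate cards2 eq_sym. Qed.

Lemma thin_cls p l : cls l = cls p -> thin l = thin p.
Proof.
by move=> Cl; have := valency_mate l; rewrite Cl valency_mate; case: (thin l); case: (thin p).
Qed.

Definition cellsum a (f : 'I_n -> F) := \sum_(l | cls l == a) f l.

Lemma cellsum_mate f p :
  cellsum (cls p) f = if thin p then f p else f p + f (mate p).
Proof.
rewrite /cellsum /thin (bigD1 p) //=; case: eqP => [mp | /eqP nmp].
  by rewrite big1 ?addr0 // => l /andP [/eqP /mate_cell [] ->]; rewrite ?mp eqxx.
rewrite (bigD1 (mate p)) /=; last by rewrite cls_mate eqxx nmp.
by rewrite big1 ?addr0 // => l /andP [/andP [/eqP /mate_cell [] -> ]]; rewrite eqxx.
Qed.

Definition cellconst (f : 'I_n -> F) := forall i i', cls i = cls i' -> f i = f i'.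

Definition balanced (f : 'I_n -> F) := forall a, cellsum a f = 0.

Lemma cellsum_thick0_cellconst (f : 'I_n -> F) :
  (forall p, ~~ thin p -> cellsum (cls p) f = 0) -> cellconst f.
Proof.
move=> f0 i i' /mate_cell [-> // | ->]; have := f0 i'; rewrite cellsum_mate.
case: ifP => [/eqP -> // | _ /(_ isT) /eqP].
by rewrite addr_eq0 oppr_pchar2 // => /eqP.
Qed.

Lemma balanced_cellconst f : balanced f -> cellconst f.
Proof. by move=> bf; apply: cellsum_thick0_cellconst => p _; apply: bf. Qed.

Lemma balanced_thin f p : balanced f -> thin p -> f p = 0.
Proof. by move=> bf tp; have := bf (cls p); rewrite cellsum_mate tp. Qed.

Lemma cellconst_balanced f :
  cellconst f -> (forall p, thin p -> f p = 0) -> balanced f.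
Proof.
move=> cf f0 a; case: (pickP (fun p => cls p == a)) => [p /eqP <- | none].
  rewrite cellsum_mate; case: ifP => [/f0 // | _].
  by rewrite (cf (mate p) p) ?cls_mate ?addrr_pchar2.
by rewrite /cellsum big_pred0.
Qed.

Lemma sum_thick_cellconst f : cellconst f -> \sum_(l | ~~ thin l) f l = 0.
Proof.
move=> cf; rewrite (partition_big (fun l => cls l) xpredT) //=.
apply: big1 => a _; case: (pickP (fun p => ~~ thin p && (cls p == a))) => [p | none].
  case/andP=> tp /eqP <-; rewrite -[RHS](addrr_pchar2 char2 (f p)).
  rewrite (eq_bigl (fun l => cls l == cls p)); last first.
    by move=> l; case: eqP => [/thin_cls -> | ]; rewrite ?tp ?andbF.
  by have := cellsum_mate f p; rewrite (negbTE tp) (cf (mate p) p) ?cls_mate.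
by rewrite big_pred0.
Qed.

Definition nbr a c m := #|[set l | (cls l == a) && (r m l == c)]|.

Lemma nbrE a c m : nbr a c m = (\sum_(l | cls l == a) (r m l == c))%N.
Proof.
rewrite /nbr -sum1_card big_mkcond [RHS]big_mkcond; apply: eq_bigr => l _.
by rewrite inE; case: (cls l == a); case: (r m l == c).
Qed.

Lemma nbr_le a c m : (nbr a c m <= kk a)%N.
Proof. by apply/subset_leq_card/subsetP => l; rewrite !inE => /andP []. Qed.

Lemma nbr_cls a c m m' : cls m = cls m' -> nbr a c m = nbr a c m'.
Proof.
have [c' tr_c] := r_tr c; have [p Hp] := r_inter a c' (cls m).
have E y : nbr a c y = inter_count r a c' x y.
  by apply: eq_card => l; rewrite !inE; congr (_ && _); apply/eqP/eqP => /tr_c.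
by move=> Cm; rewrite !E (Hp x m) // (Hp x m').
Qed.

Lemma sum_nbr a e c c' : (forall y z, r y z = c <-> r z y = c') ->
  (\sum_(i | cls i == a) nbr e c i = \sum_(m | cls m == e) nbr a c' m)%N.
Proof.
move=> tr_c; rewrite (eq_bigr _ (fun i _ => nbrE e c i)).
rewrite (eq_bigr _ (fun m _ => nbrE a c' m)) exchange_big.
apply: eq_bigr => m _; apply: eq_bigr => i _.
by congr (nat_of_bool _); apply/eqP/eqP => /tr_c.
Qed.

Lemma sum_nat_cell a k : (\sum_(i | cls i == a) k = kk a * k)%N.
Proof.
by rewrite -sum_nat_const; apply: eq_bigl => i; rewrite inE.
Qed.

Lemma natr_neq0_le2 s : (s <= 2)%N -> (s%:R : F) != 0 -> s = 1%N.
Proof.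
case: s => [|[|[|s]]] // _; first by rewrite eqxx.
by rewrite (pcharf0 char2) eqxx.
Qed.

Definition ind a : 'cV[F]_n := \col_i (cls i == a)%:R.

Lemma ind_entry a i : ind a i 0 = (cls i == a)%:R.
Proof. by rewrite mxE. Qed.

Lemma mul_ind (B : 'M[F]_n) a i : (B *m ind a) i 0 = cellsum a (B i).
Proof.
rewrite mxE /cellsum [RHS]big_mkcond; apply: eq_bigr => l _; rewrite mxE.
by case: (cls l == a); rewrite ?mulr1 ?mulr0.
Qed.

Lemma cellsum_adj a c i : cellsum a (adj c i) = (nbr a c i)%:R.
Proof.
rewrite nbrE natr_sum; apply: eq_bigr => l _.
by rewrite mxE.
Qed.

Lemma dual_mul a m (B : 'M[F]_(n, m)) i j :
  (dual a *m B) i j = (cls i == a)%:R * B i j.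
Proof.
rewrite mxE (bigD1 i) //= big1 ?addr0 => [|l nli]; rewrite mxE ?eqxx.
  by case: (cls i == a); rewrite ?mul1r ?mul0r.
by rewrite eq_sym (negbTE nli) mul0r.
Qed.

Lemma mul_ev (B : 'M[F]_n) i j : (B *m ev j) i 0 = B i j.
Proof. by rewrite -colE mxE. Qed.

Lemma cellsum_trmx (B : 'M[F]_n) a q :
  cellsum a ((B *m ev q)^~ 0) = (B^T *m ind a) q 0.
Proof. by rewrite mul_ind; apply: eq_bigr => l _; rewrite mul_ev mxE. Qed.

Lemma ind_cellconst a : cellconst ((ind a)^~ 0).
Proof. by move=> i i' Ci; rewrite !mxE Ci. Qed.

Lemma ind_balanced p : ~~ thin p -> balanced ((ind (cls p))^~ 0).
Proof.
move=> tp; apply: cellconst_balanced; first exact: ind_cellconst.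
by move=> l tl; rewrite mxE; case: eqP => // /thin_cls; rewrite tl (negbTE tp).
Qed.

Lemma ev_thin l : thin l -> ev l = ind (cls l).
Proof.
move=> tl; apply/matrixP => i k; rewrite ord1 !mxE eqxx andbT.
case: (eqVneq i l) => [-> | nil]; first by rewrite eqxx.
by case: eqP => // /mate_cell; rewrite (eqP tl) => -[] eil; rewrite eil eqxx in nil.
Qed.

Lemma cellsum_cellconst_mulr a (f g : 'I_n -> F) l0 :
  cellconst g -> cls l0 = a -> cellsum a (fun l => f l * g l) = cellsum a f * g l0.
Proof.
move=> cg Cl0; rewrite /cellsum mulr_suml; apply: eq_bigr => l /eqP Cl.
by rewrite (cg l l0) // Cl.
Qed.

Lemma sum_mul_cellconst (f f' g : 'I_n -> F) :
  cellconst g -> (forall a, cellsum a f = cellsum a f') ->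
  \sum_m f m * g m = \sum_m f' m * g m.
Proof.
move=> cg ff'; rewrite (partition_big (fun m => cls m) xpredT) //=.
rewrite [RHS](partition_big (fun m => cls m) xpredT) //=; apply: eq_bigr => a _.
case: (pickP (fun m => cls m == a)) => [l0 /eqP Cl0 | none]; last by rewrite !big_pred0.
transitivity (cellsum a f * g l0); first exact: cellsum_cellconst_mulr.
by rewrite ff'; symmetry; apply: cellsum_cellconst_mulr.
Qed.

Lemma sum_balanced_cellconst f g :
  balanced f -> cellconst g -> \sum_m f m * g m = 0.
Proof.
move=> bf cg; rewrite (@sum_mul_cellconst f (fun=> 0) g) // ?big1 // => [m _ | a].
  by rewrite mul0r.
by rewrite bf /cellsum big1.
Qed.

(** * Subspaces stable under the Terwilliger algebra *)

Lemma balanced0 : balanced ((0 : 'cV[F]_n)^~ 0).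
Proof. by move=> a; rewrite /cellsum big1 // => l _; rewrite mxE. Qed.

Lemma balancedD (u w : 'cV[F]_n) :
  balanced (u^~ 0) -> balanced (w^~ 0) -> balanced ((u + w)^~ 0).
Proof.
move=> bu bw a; rewrite /cellsum (eq_bigr (fun l => u l 0 + w l 0)) => [|l _]; last first.
  by rewrite mxE.
by rewrite big_split /=; move: (bu a) (bw a); rewrite /cellsum => -> ->; rewrite addr0.
Qed.

Lemma balancedZ k (u : 'cV[F]_n) : balanced (u^~ 0) -> balanced ((k *: u)^~ 0).
Proof.
move=> bu a; rewrite /cellsum (eq_bigr (fun l => k * u l 0)) => [|l _]; last by rewrite mxE.
by rewrite -mulr_sumr; move: (bu a); rewrite /cellsum => ->; rewrite mulr0.
Qed.

Lemma cellconstD (u w : 'cV[F]_n) :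
  cellconst (u^~ 0) -> cellconst (w^~ 0) -> cellconst ((u + w)^~ 0).
Proof. by move=> cu cw i i' Ci; rewrite !mxE (cu i i') // (cw i i'). Qed.

Lemma cellconstZ k (w : 'cV[F]_n) : cellconst (w^~ 0) -> cellconst ((k *: w)^~ 0).
Proof. by move=> cw i i' Ci; rewrite !mxE (cw i i'). Qed.

Lemma terwilliger_cellconst M (w : 'cV[F]_n) :
  T M -> cellconst (w^~ 0) -> cellconst ((M *m w)^~ 0).
Proof.
move=> TM; apply: (@terwilliger_stable F n d r x (fun w => cellconst (w^~ 0))) TM.
- exact: cellconstD.
- exact: cellconstZ.
- move=> c v cv i i' Ci; rewrite !mxE; apply: sum_mul_cellconst => // a.
  by rewrite !cellsum_adj (nbr_cls _ _ Ci).
- by move=> a v cv i i' Ci; rewrite !dual_mul Ci (cv i i').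
Qed.

Lemma terwilliger_balanced M (u : 'cV[F]_n) :
  T M -> balanced (u^~ 0) -> balanced ((M *m u)^~ 0).
Proof.
move=> TM bu a; have cMa := terwilliger_cellconst (terwilliger_tr r_tr TM) (ind_cellconst a).
rewrite -(sum_balanced_cellconst bu cMa) /cellsum.
rewrite (eq_bigr (fun l => \sum_m M l m * u m 0)) => [|l _]; last by rewrite mxE.
rewrite exchange_big; apply: eq_bigr => m _; rewrite mul_ind mulr_sumr.
by apply: eq_bigr => l _; rewrite mxE mulrC.
Qed.

Definition linked a b := exists2 P, T P & P *m ind a = ind b.

Lemma linked_refl a : linked a a.
Proof. by exists 1%:M; [apply: T_one | rewrite mul1mx]. Qed.

Lemma linked_trans a b c : linked a b -> linked b c -> linked a c.
Proof.
move=> [P TP Pab] [Q TQ Qbc]; exists (Q *m P); first exact: T_mul.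
by rewrite -mulmxA Pab.
Qed.

Lemma linked_of_nbr1 i e c : kk (cls i) = kk e -> nbr e c i = 1%N -> linked (cls i) e.
Proof.
move=> kie nbr1; have [c' tr_c] := r_tr c.
have nbr'1 m : cls m = e -> nbr (cls i) c' m = 1%N.
  move=> Cm.
  have lhs : (\sum_(i' | cls i' == cls i) nbr e c i' = kk (cls i))%N.
    rewrite (eq_bigr (fun=> 1%N)) ?sum_nat_cell ?muln1 // => i' /eqP Ci'.
    by rewrite (nbr_cls _ _ Ci') nbr1.
  have rhs : (\sum_(m' | cls m' == e) nbr (cls i) c' m' = kk e * nbr (cls i) c' m)%N.
    by rewrite -sum_nat_cell; apply: eq_bigr => m' /eqP Cm'; apply: nbr_cls; rewrite Cm Cm'.
  have := sum_nbr (cls i) e tr_c; rewrite lhs rhs kie -{1}[kk e]muln1 => /eqP.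
  by rewrite eqn_pmul2l => [/eqP // |]; rewrite -Cm valency_mate.
exists (dual e *m adj c'); first by apply: T_mul; [apply: T_dual | apply: T_adj].
apply/matrixP => m k; rewrite ord1 -mulmxA dual_mul mul_ind cellsum_adj mxE.
by case: eqP => [/nbr'1 -> | _]; rewrite ?mul1r ?mul0r.
Qed.

Lemma linked_thin i j : thin i -> thin j -> linked (cls i) (cls j).
Proof.
move=> ti tj; apply: (@linked_of_nbr1 _ _ (r i j)).
  by rewrite !valency_mate ti tj.
apply/eqP/cards1P; exists j; apply/setP => l; rewrite !inE.
apply/andP/eqP => [[/eqP /mate_cell [] -> //] | ->]; last by rewrite !eqxx.
by rewrite (eqP tj).
Qed.

Definition linked_to b (u : 'cV[F]_n) :=
  balanced (u^~ 0) /\ forall i, u i 0 != 0 -> linked (cls i) b.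

Lemma balanced_thick (u : 'cV[F]_n) i :
  balanced (u^~ 0) -> u i 0 != 0 -> kk (cls i) = 2%N.
Proof.
move=> bu nz; rewrite valency_mate; case: (boolP (thin i)) => // ti.
by move: nz; rewrite (balanced_thin bu ti) eqxx.
Qed.

Lemma terwilliger_linked_to b M u : T M -> linked_to b u -> linked_to b (M *m u).
Proof.
move=> TM; apply: (@terwilliger_stable F n d r x (linked_to b)) TM.
- move=> u1 u2 [b1 l1] [b2 l2]; split; first exact: balancedD.
  move=> i; rewrite mxE; have [u1i0 | nz1 _] := eqVneq (u1 i 0) 0; last exact: l1.
  by rewrite u1i0 add0r => /l2.
- move=> k u1 [b1 l1]; split; first exact: balancedZ.
  by move=> i; rewrite mxE mulf_eq0 negb_or => /andP [_ /l1].
- move=> c u1 [b1 l1]; have b1' := terwilliger_balanced (T_adj F r x c) b1.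
  split=> // i nz; have ki := balanced_thick b1' nz.
  (* Some cell [e] contributes [nbr e c i] times the value of [u1] on [e]; this is
     nonzero, so in characteristic 2 the point [i] has exactly one neighbour in [e]. *)
  move: nz; rewrite mxE (partition_big (fun l => cls l) xpredT) //= => /sum_neq0P [e _ se].
  have [l0 /eqP Cl0] := sum_neq0P se; rewrite mulf_eq0 negb_or => /andP [_ nz0].
  have se' : cellsum e (fun l => adj c i l * u1 l 0) != 0 := se.
  rewrite (cellsum_cellconst_mulr _ (balanced_cellconst b1) Cl0) cellsum_adj in se'.
  have nbr1 : nbr e c i = 1%N.
    apply: natr_neq0_le2; first exact: leq_trans (nbr_le e c i) (qthin_x e).
    by move: se'; rewrite mulf_eq0 negb_or => /andP [].
  apply: linked_trans (l1 _ nz0); rewrite Cl0; apply: linked_of_nbr1 nbr1.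
  by rewrite -Cl0 (balanced_thick b1 nz0) ki.
- move=> a u1 [b1 l1]; split; first exact: terwilliger_balanced (T_dual F r x a) b1.
  by move=> i; rewrite dual_mul mulf_eq0 negb_or => /andP [_ /l1].
Qed.

Lemma linked_to_ind p : ~~ thin p -> linked_to (cls p) (ind (cls p)).
Proof.
move=> tp; split; first exact: ind_balanced.
move=> i; rewrite mxE; case: (eqVneq (cls i) (cls p)) => [-> _ | ne].
  exact: linked_refl.
by rewrite eqxx.
Qed.

(** * The radical *)

Local Notation radical_annihilates := (jacobson_radical_annihilates
  (T_one F r x) (@T_add F n d r x) (@T_scale F n d r x) (@T_mul F n d r x)).

Lemma ind_simple_quotient b (W : 'cV[F]_n -> Prop) : W 0 ->
  (forall N, T N -> ~ W (N *m ind b) ->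
    exists2 i, (N *m ind b) i 0 != 0 & linked (cls i) b) ->
  forall N, T N -> ~ W (N *m ind b) ->
    exists2 P, T P & W (P *m (N *m ind b) - ind b).
Proof.
move=> W0 hyp N TN nW; have [i nz [P0 TP0 P0b]] := hyp N TN nW.
set alpha := (N *m ind b) i 0.
exists (alpha^-1 *: (P0 *m dual (cls i))).
  by apply: T_scale; apply: T_mul => //; apply: T_dual.
rewrite -scalemxAl -mulmxA.
suff -> : dual (cls i) *m (N *m ind b) = alpha *: ind (cls i).
  by rewrite -scalemxAr scalerA mulVf // scale1r P0b subrr.
have cN := terwilliger_cellconst TN (ind_cellconst b).
apply/matrixP => m k; rewrite ord1 dual_mul [RHS]mxE ind_entry mulrC.
by case: eqP => [/cN -> | _]; rewrite ?mulr1 ?mulr0.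
Qed.

Lemma radical_thin0 M i j :
  jacobson_radical T M -> thin i -> thin j -> M i j = 0.
Proof.
move=> radM ti tj.
have : balanced ((M *m ind (cls j))^~ 0).
  apply: (radical_annihilates (W := fun w => balanced (w^~ 0))) radM.
  - exact: balanced0.
  - exact: balancedD.
  - exact: terwilliger_balanced.
  - by move/(_ (cls j))/eqP; rewrite cellsum_mate tj ind_entry eqxx oner_eq0.
  apply: (ind_simple_quotient (W := fun w => balanced (w^~ 0))) => [|N TN nbal].
    exact: balanced0.
  have cN := terwilliger_cellconst TN (ind_cellconst (cls j)).
  have [i0 ti0 nz] : exists2 i0, thin i0 & (N *m ind (cls j)) i0 0 != 0.
    apply: NNPP => none; apply: nbal; apply: cellconst_balanced cN _ => p tp.
    by have [// | nz] := eqVneq ((N *m ind (cls j)) p 0) 0; case: none; exists p.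
  by exists i0 => //; apply: linked_thin.
by move/balanced_thin/(_ ti); rewrite /= -(ev_thin tj) mul_ev.
Qed.

Lemma radical_mul_ind0 M p :
  jacobson_radical T M -> ~~ thin p -> M *m ind (cls p) = 0.
Proof.
move=> radM tp; apply: (radical_annihilates (W := eq^~ 0)) radM.
- by [].
- by move=> u w -> ->; rewrite addr0.
- by move=> N w _ ->; rewrite mulmx0.
- by move/matrixP/(_ p 0); rewrite !mxE eqxx; apply/eqP; apply: oner_neq0.
apply: (ind_simple_quotient (W := eq^~ 0)) => // N TN /eqP /matrix0Pn [i [k]].
rewrite ord1 => nz.
by exists i => //; have [_] := terwilliger_linked_to TN (linked_to_ind tp); apply.
Qed.

Lemma dual_mul_decomp p (w : 'cV[F]_n) :
  dual (cls p) *m w - cellsum (cls p) (w^~ 0) *: ev p =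
  (if thin p then 0 else w (mate p) 0) *: ind (cls p).
Proof.
apply/matrixP => l k; rewrite ord1 mxE dual_mul !mxE andbT cellsum_mate.
rewrite /thin; case: (eqVneq (cls l) (cls p)) => [Cl | nCl] /=; last first.
  have /negbTE -> : l != p by apply: contraNneq nCl => ->.
  by rewrite /= mulr0n !mulr0 mul0r subr0.
case: (mate_cell Cl) => -> {l Cl}.
  rewrite eqxx; case: (eqVneq (mate p) p) => _ /=; rewrite !mulr1n mul1r !mulr1 ?subrr //.
  by rewrite opprD addrA subrr add0r oppr_pchar2.
case: (eqVneq (mate p) p) => [-> | _] /=; rewrite ?eqxx /= !mulr1n mul1r mulr1.
  by rewrite mul0r subrr.
by rewrite mulr0 subr0.
Qed.

Lemma ev_simple_quotient q : ~~ thin q ->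
  forall N, T N -> ~ cellconst ((N *m ev q)^~ 0) ->
    exists2 P, T P & cellconst ((P *m (N *m ev q) - ev q)^~ 0).
Proof.
move=> tq N TN ncc.
have [p tp nz] : exists2 p, ~~ thin p & cellsum (cls p) ((N *m ev q)^~ 0) != 0.
  apply: NNPP => none; apply: ncc; apply: cellsum_thick0_cellconst => p tp.
  by have [// | nz] := eqVneq (cellsum (cls p) ((N *m ev q)^~ 0)) 0; case: none; exists p.
set alpha := cellsum (cls p) _ in nz.
have [P0 TP0 P0qp] : linked (cls q) (cls p).
  have [_] := terwilliger_linked_to (terwilliger_tr r_tr TN) (linked_to_ind tp); apply.
  by rewrite -cellsum_trmx.
have TP0t := terwilliger_tr r_tr TP0.
(* Modulo cell-constant vectors, [dual (cls p)] maps [N *m ev q] to [alpha *: ev p],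
   and [dual (cls q) *m P0^T] maps [ev p] to [ev q] since [P0] maps [ind (cls q)]
   to [ind (cls p)]. *)
exists (alpha^-1 *: (dual (cls q) *m P0^T *m dual (cls p))).
  by apply: T_scale; apply: T_mul; [apply: T_mul; [apply: T_dual | ] | apply: T_dual].
set v := N *m ev q.
have -> : alpha^-1 *: (dual (cls q) *m P0^T *m dual (cls p)) *m v - ev q =
    alpha^-1 *: (dual (cls q) *m (P0^T *m (dual (cls p) *m v - alpha *: ev p)))
    + (dual (cls q) *m (P0^T *m ev p) - ev q).
  rewrite !mulmxBr scalerBr -!scalemxAr scalerA mulVf // scale1r addrA subrK.
  by rewrite -scalemxAl !mulmxA.
apply: cellconstD.
  apply/cellconstZ/(terwilliger_cellconst (T_dual F r x _))/(terwilliger_cellconst TP0t).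
  by rewrite dual_mul_decomp; apply/cellconstZ/ind_cellconst.
have s1 : cellsum (cls q) ((P0^T *m ev p)^~ 0) = 1.
  by rewrite cellsum_trmx trmxK P0qp ind_entry eqxx.
have := dual_mul_decomp q (P0^T *m ev p); rewrite s1 scale1r => ->.
exact/cellconstZ/ind_cellconst.
Qed.

Lemma radical_col_cellconst M q :
  jacobson_radical T M -> ~~ thin q -> cellconst ((M *m ev q)^~ 0).
Proof.
move=> radM tq; apply: (radical_annihilates (W := fun w => cellconst (w^~ 0))) radM.
- by move=> i i' _; rewrite !mxE.
- exact: cellconstD.
- by move=> N w TN; apply: terwilliger_cellconst.
- move/(_ q (mate q) (esym (cls_mate q))) /eqP.
  by rewrite !mxE !eqxx (negbTE (tq : mate q != q)) /= mulr1n mulr0n oner_eq0.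
exact: ev_simple_quotient.
Qed.

Definition block_form (M : 'M[F]_n) :=
  (forall i i' j j', cls i = cls i' -> cls j = cls j' -> M i j = M i' j') /\
  (forall i j, thin i -> thin j -> M i j = 0).

Lemma radical_block_form M : jacobson_radical T M -> block_form M.
Proof.
move=> radM; split; last by move=> i j; apply: radical_thin0.
have colM j : cellconst ((M *m ev j)^~ 0).
  have [tj | tj] := boolP (thin j); last exact: radical_col_cellconst.
  by rewrite ev_thin //; apply: terwilliger_cellconst radM.1 (ind_cellconst _).
have rowM i j : M i (mate j) = M i j.
  have [tj | tj] := boolP (thin j); first by rewrite (eqP tj).
  move/matrixP/(_ i 0): (radical_mul_ind0 radM tj).
  rewrite mul_ind cellsum_mate (negbTE tj) mxE => /eqP.
  by rewrite addr_eq0 oppr_pchar2 // => /eqP.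
move=> i i' j j' Ci /mate_cell Cj.
have := colM j i i' Ci; rewrite !mul_ev => ->.
by case: Cj => ->; rewrite ?rowM.
Qed.

(** * Block form and J_1 *)

Lemma dual_ones_dual a b i j :
  (dual a *m onesmx F n *m dual b) i j = (cls i == a)%:R * (cls j == b)%:R.
Proof.
rewrite -mulmxA dual_mul; congr (_ * _).
rewrite mxE (bigD1 j) //= big1 ?addr0 => [|l nlj]; rewrite !mxE ?eqxx ?mul1r //.
by rewrite (negbTE nlj) /= mulr0n.
Qed.

Lemma sum_delta (I : finType) (P : pred I) (i : I) (f : I -> F) :
  \sum_(l | P l) (i == l)%:R * f l = if P i then f i else 0.
Proof.
rewrite big_mkcond (bigD1 i) //= eqxx mul1r big1 ?addr0 // => l nli.
by rewrite eq_sym (negbTE nli) mul0r; case: (P l).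
Qed.

Lemma J1_entry (c : 'I_d.+1 -> 'I_d.+1 -> F) i j :
  (\sum_a \sum_(b | maxn (kk a) (kk b) == 2%N)
     c a b *: (dual a *m onesmx F n *m dual b)) i j =
  if maxn (kk (cls i)) (kk (cls j)) == 2%N then c (cls i) (cls j) else 0.
Proof.
rewrite summxE (eq_bigr (fun a => (cls i == a)%:R *
  \sum_(b | maxn (kk a) (kk b) == 2%N) (cls j == b)%:R * c a b)) => [|a _].
  by rewrite sum_delta /= sum_delta.
rewrite summxE mulr_sumr; apply: eq_bigr => b _.
by rewrite mxE dual_ones_dual mulrC mulrA.
Qed.

Lemma maxn_valency i j : (maxn (kk (cls i)) (kk (cls j)) == 2%N) = ~~ (thin i && thin j).
Proof. by rewrite !valency_mate; case: (thin i); case: (thin j). Qed.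

Definition cell_rep a := odflt x [pick i | cls i == a].

Lemma cls_cell_rep i : cls (cell_rep (cls i)) = cls i.
Proof. by rewrite /cell_rep; case: pickP => [j /eqP // | /(_ i)]; rewrite eqxx. Qed.

Lemma block_formP M : block_form M <-> @J1 F n d r x M.
Proof.
split=> [[bM tM] | [c ->]].
  exists (fun a b => M (cell_rep a) (cell_rep b)); apply/matrixP => i j.
  rewrite J1_entry maxn_valency; case: ifP => [_ | /negbFE /andP [ti tj]]; last exact: tM.
  by apply: bM; rewrite cls_cell_rep.
split=> [i i' j j' Ci Cj | i j ti tj]; rewrite !J1_entry ?Ci ?Cj //.
by rewrite maxn_valency ti tj.
Qed.

Lemma ones_terwilliger : T (onesmx F n).
Proof.
suff -> : onesmx F n = \sum_c adj c by apply: terwilliger_sum => c _; apply: T_adj.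
apply/matrixP => i j; rewrite summxE mxE (bigD1 (r i j)) //= big1 ?addr0 => [|c ncij].
  by rewrite mxE eqxx.
by rewrite mxE eq_sym (negbTE ncij).
Qed.

Lemma J1_terwilliger M : @J1 F n d r x M -> T M.
Proof.
case=> c ->; apply: terwilliger_sum => a _; apply: terwilliger_sum => b _.
apply: T_scale; apply: T_mul; last exact: T_dual.
by apply: T_mul; [apply: T_dual | apply: ones_terwilliger].
Qed.

Lemma block_form_mull Q M : T Q -> block_form M -> block_form (Q *m M).
Proof.
move=> TQ [bM tM].
have colM j : cellconst ((M *m ev j)^~ 0) by move=> i i' Ci; rewrite !mul_ev (bM i i' j j).
split=> [i i' j j' Ci Cj | i j ti tj].
  have /(_ i i' Ci) := terwilliger_cellconst TQ (colM j); rewrite mulmxA !mul_ev => ->.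
  by rewrite !mxE; apply: eq_bigr => l _; rewrite (bM l l j j').
have bal : balanced ((M *m ev j)^~ 0).
  by apply: cellconst_balanced (colM j) _ => p tp; rewrite /= mul_ev tM.
by have := balanced_thin (terwilliger_balanced TQ bal) ti; rewrite /= mulmxA mul_ev.
Qed.

Lemma mulmx_thin (B C : 'M[F]_n) i j : cellconst (B i) -> cellconst (C^~ j) ->
  (B *m C) i j = \sum_(l | thin l) B i l * C l j.
Proof.
move=> cB cC; rewrite mxE (bigID thin) /=.
rewrite (@sum_thick_cellconst (fun l => B i l * C l j)) ?addr0 //.
by move=> l l' Cl; rewrite (cB l l') // (cC l l').
Qed.

Lemma block_form_cube N : block_form N -> N *m N *m N = 0.
Proof.
move=> [bN tN].
have rowN i : cellconst (N i) by move=> l l' Cl; apply: bN.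
have colN j : cellconst (N^~ j) by move=> l l' Cl; apply: bN.
have N2thin i l : thin l -> (N *m N) i l = 0.
  by move=> tl; rewrite mulmx_thin //; apply: big1 => m tm; rewrite (tN m l tm tl) mulr0.
have rowN2 i : cellconst ((N *m N) i).
  by move=> l l' Cl; rewrite !mxE; apply: eq_bigr => m _; rewrite (bN m m l l').
apply/matrixP => i j; rewrite [RHS]mxE mulmx_thin //.
by apply: big1 => l tl; rewrite N2thin // mul0r.
Qed.

End QuasiThin.

Theorem theoremC (F : fieldType) (n d : nat) (r : 'I_n -> 'I_n -> 'I_d.+1) (x : 'I_n) :
  (2 \in [pchar F])%N ->
  is_scheme r -> quasi_thin r ->
  forall M : 'M[F]_n,
    jacobson_radical (terwilliger r x) M <-> @J1 F n d r x M.
Proof.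
move=> char2 [_ _ _ r_tr r_inter] qthin M.
have qthin_x := qthin x.
split=> [radM | /(block_formP qthin_x) blockM].
  by apply/block_formP => //; apply: radical_block_form radM.
apply: (jacobson_radical_nil (T_one F r x) (@T_add F n d r x) (@T_scale F n d r x)
  (@T_mul F n d r x)).
  by apply/J1_terwilliger/block_formP.
move=> Q TQ; exists 3; rewrite /mxpow /= mul1mx.
exact: block_form_cube (block_form_mull r_tr r_inter qthin_x char2 TQ blockM).
Qed.
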